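(* Fix spins $j_1,\dots,j_4$ with $J=\sum_i j_i\in\mathbb{Z}$. For admissible $(S,T)$, with $k_{ij}=k_{ij}(j_i,S,T)$, $$2J_1\cdot J_2\,|S,T\rangle=\big(S(S+1)-j_1(j_1+1)-j_2(j_2+1)\big)|S,T\rangle+\big((k_{14}+1)(k_{23}+1)|S,T+1\rangle-k_{14}k_{23}|S,T\rangle\big)+\big((k_{13}+1)(k_{24}+1)|S,T-1\rangle-k_{13}k_{24}|S,T\rangle\big).$$ In particular $J_1\cdot J_2$ does not change the value of $S$. Similarly, $J_1\cdot J_3|S,T\rangle$ is a linear combination of states $|S',T\rangle$ with the same $T$.
   Context: $(z_i|S,T\rangle=\prod_{i<j}[z_i|z_j\rangle^{k_{ij}}/k_{ij}!$ is a holomorphic function of $z_1,\dots,z_4\in\mathbb{C}^2$, where $[z|w\rangle=z_0w_1-z_1w_0$. Here $U=J-S-T$ and $k_{12}=j_1+j_2-S$, $k_{34}=j_3+j_4-S$, $k_{13}=j_1+j_3-T$, $k_{24}=j_2+j_4-T$, $k_{14}=j_1+j_4-U$, $k_{23}=j_2+j_3-U$. $(S,T)$ is admissible iff all $k_{ij}\ge0$, and $|S,T\rangle:=0$ if $(S,T)$ is not admissible. The operators act on holomorphic functions of $(z_1,\dots,z_4)$ by $$E_{ij}=\sum_{A=0,1}z_i^A\frac{\partial}{\partial z_j^A},\qquad 2J_i\cdot J_j:=E_{ij}E_{ji}-\tfrac12E_{ii}E_{jj}-E_{ii}.$$ *)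

(* states are polynomials ({mpoly R[8]}) in the 8 complex
   coordinates z_i^A (i < 4, A < 2); operators are formal differential
   operators, which agree with holomorphic derivatives on polynomials. *)
From HB Require Import structures.
From mathcomp Require Import all_boot all_order all_algebra.
From mathcomp Require Import mpoly.
Set Implicit Arguments. Unset Strict Implicit. Unset Printing Implicit Defensive.
Import Order.TTheory GRing.Theory Num.Theory.
Local Open Scope ring_scope.

(* index of the coordinate z_i^A, with i in {0..3} (spin label i+1) and A in {0,1} *)
Definition zidx (i : 'I_4) (A : 'I_2) : 'I_8 := inord (2 * i + A).

Section Ops.
Variable R : numFieldType.

Definition zv (i : 'I_4) (A : 'I_2) : {mpoly R[8]} := 'X_(zidx i A).

Definition brk (i j : 'I_4) : {mpoly R[8]} :=
  zv i 0 * zv j 1 - zv i 1 * zv j 0.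

Definition Eop (i j : 'I_4) (p : {mpoly R[8]}) : {mpoly R[8]} :=
  zv i 0 * mderiv (zidx j 0) p + zv i 1 * mderiv (zidx j 1) p.

Definition twoJJ (i j : 'I_4) (p : {mpoly R[8]}) : {mpoly R[8]} :=
  Eop i j (Eop j i p) - 2^-1 *: Eop i i (Eop j j p) - Eop i i p.
End Ops.

(* Spins j1..j4, S, T are rationals (half-integers in practice). *)
Definition Utot (j1 j2 j3 j4 S T : rat) : rat := (j1 + j2 + j3 + j4) - S - T.
Definition k12 (j1 j2 j3 j4 S T : rat) : rat := j1 + j2 - S.
Definition k34 (j1 j2 j3 j4 S T : rat) : rat := j3 + j4 - S.
Definition k13 (j1 j2 j3 j4 S T : rat) : rat := j1 + j3 - T.
Definition k24 (j1 j2 j3 j4 S T : rat) : rat := j2 + j4 - T.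
Definition k14 (j1 j2 j3 j4 S T : rat) : rat := j1 + j4 - Utot j1 j2 j3 j4 S T.
Definition k23 (j1 j2 j3 j4 S T : rat) : rat := j2 + j3 - Utot j1 j2 j3 j4 S T.

Definition admissible (j1 j2 j3 j4 S T : rat) : bool :=
  [&& k12 j1 j2 j3 j4 S T \is a Num.nat, k34 j1 j2 j3 j4 S T \is a Num.nat,
      k13 j1 j2 j3 j4 S T \is a Num.nat, k24 j1 j2 j3 j4 S T \is a Num.nat,
      k14 j1 j2 j3 j4 S T \is a Num.nat & k23 j1 j2 j3 j4 S T \is a Num.nat].

Definition bfac (R : numFieldType) (a b : 'I_4) (k : rat) : {mpoly R[8]} :=
  ((Num.truncn k)`!%:R)^-1 *: (brk R a b) ^+ (Num.truncn k).

Definition state (R : numFieldType) (j1 j2 j3 j4 S T : rat) : {mpoly R[8]} :=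
  if admissible j1 j2 j3 j4 S T then
    bfac R 0 1 (k12 j1 j2 j3 j4 S T) * bfac R 2 3 (k34 j1 j2 j3 j4 S T) *
    bfac R 0 2 (k13 j1 j2 j3 j4 S T) * bfac R 1 3 (k24 j1 j2 j3 j4 S T) *
    bfac R 0 3 (k14 j1 j2 j3 j4 S T) * bfac R 1 2 (k23 j1 j2 j3 j4 S T)
  else 0.

From mathcomp Require Import all_boot all_order all_algebra.
From mathcomp Require Import mpoly.
From mathcomp Require Import ring lra zify.
Set Implicit Arguments. Unset Strict Implicit. Unset Printing Implicit Defensive.
Import Order.TTheory GRing.Theory Num.Theory.
Local Open Scope ring_scope.

(* Up to normalisation, |S,T> is the product of the divided powers
   [z_i|z_j>^k_ij / k_ij!. Each E_ij is a derivation acting on a bracket by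
   substituting an index, so on such a product it moves one unit of exponent
   from one bracket to another; in J_1.J_2 the only moves trade (k13, k24) for
   (k14, k23), i.e. T -> T -+ 1, while E_ii is the degree operator in z_i.
   Extending divided powers by 0 to negative exponents makes these recurrences
   hold for all integer labels, and non-admissible labels are exactly those with
   a negative exponent, so both sides vanish together.  J_1.J_3 trades
   (k12, k34) for (k14, k23) instead, i.e. S -> S -+ 1. *)

Section DividedPowers.
Variables (R : numFieldType) (A : comAlgType R).

Definition dpow (p : A) (n : int) : A :=
  if n is Posz m then (m`!%:R)^-1 *: p ^+ m else 0.

Lemma dpow_neg (p : A) n : n < 0 -> dpow p n = 0.
Proof. by case: n. Qed.

Lemma mul_dpow (p : A) (n : int) : p * dpow p (n - 1) = n%:~R *: dpow p n.
Proof.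
case: n => [[|m]|m] /=; rewrite ?mulr0 ?scale0r ?scaler0 //.
rewrite subn1 /= -scalerAr -exprS scalerA factS natrM invfM.
by rewrite mulrA mulfV ?mul1r // pnatr_eq0.
Qed.

Section Derivation.
Variable D : A -> A.
Hypothesis D_scale : forall (k : R) p, D (k *: p) = k *: D p.
Hypothesis D_mul : forall p q, D (p * q) = D p * q + p * D q.

Lemma derivation1 : D 1 = 0.
Proof.
have := D_mul 1 1; rewrite !(mulr1, mul1r) => D1.
by apply: (addrI (D 1)); rewrite addr0 -D1.
Qed.

Lemma derivation_exp p m : D (p ^+ m.+1) = m.+1%:R *: (p ^+ m * D p).
Proof.
elim: m => [|m IH]; first by rewrite expr1 expr0 mul1r scaler_nat mulr1n.
by rewrite exprS D_mul IH !scaler_nat mulrnAr mulrA -exprS [D p * _]mulrC -mulrS.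
Qed.

Lemma derivation_dpow p n : D (dpow p n) = dpow p (n - 1) * D p.
Proof.
have D0 : D 0 = 0 by have := D_scale 0 0; rewrite !scale0r.
case: n => [[|m]|m] /=.
- by rewrite D_scale derivation1 scaler0 mul0r.
- rewrite subn1 /= D_scale derivation_exp scalerA.
  by rewrite factS natrM invfM mulrAC mulVf ?mul1r ?scalerAl ?pnatr_eq0.
- by rewrite D0 mul0r.
Qed.
End Derivation.
End DividedPowers.

Section SpinNetwork.
Variable R : numFieldType.
Local Notation P := {mpoly R[8]}.

Lemma mderiv_X (i j : 'I_8) : mderiv j ('X_i : P) = (i == j)%:R.
Proof.
rewrite mderivX mnm1E; case: eqP => [->|_]; last by rewrite scale0r.
by rewrite -{1}[U_(j)%MM]add0m addmK mpolyX0 scale1r.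
Qed.

Lemma zidx_eq i A j B : (zidx i A == zidx j B) = (i == j) && (A == B).
Proof.
have val_zidx (k : 'I_4) (C : 'I_2) : val (zidx k C) = (2 * k + C)%N.
  by rewrite /zidx /= inordK //; have := ltn_ord k; have := ltn_ord C; lia.
rewrite -val_eqE (val_zidx i A) (val_zidx j B).
apply/idP/andP => [/eqP eq_idx | [/eqP -> /eqP ->] //].
have := ltn_ord A; have := ltn_ord B => *.
by split; apply/eqP; apply: ord_inj; lia.
Qed.

Lemma Eop_add i j (p q : P) : Eop i j (p + q) = Eop i j p + Eop i j q.
Proof. by rewrite /Eop !mderivD !mulrDr addrACA. Qed.

Lemma Eop_scale i j k (p : P) : Eop i j (k *: p) = k *: Eop i j p.
Proof. by rewrite /Eop !mderivZ scalerDr !scalerAr. Qed.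

Lemma Eop_mul i j (p q : P) : Eop i j (p * q) = Eop i j p * q + p * Eop i j q.
Proof. rewrite /Eop !mderivM; ring. Qed.

Lemma Eop_dpow i j (p : P) n : Eop i j (dpow p n) = dpow p (n - 1) * Eop i j p.
Proof.
by apply: (@derivation_dpow _ _ (Eop i j)) => [k q|q r]; [exact: Eop_scale | exact: Eop_mul].
Qed.

Lemma Eop_zv i j k A : Eop i j (zv R k A) = (j == k)%:R * zv R i A.
Proof.
rewrite /Eop /zv !mderiv_X !zidx_eq eq_sym.
case: (j == k); last by rewrite !mulr0 addr0 mul0r.
by case: A => [[|[|//]] ?]; rewrite /= ?mulr1 ?mulr0 ?addr0 ?add0r ?mul1r;
  congr 'X__; apply: val_inj.
Qed.

Lemma Eop_opp i j (p : P) : Eop i j (- p) = - Eop i j p.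
Proof. by rewrite -scaleN1r Eop_scale scaleN1r. Qed.

Lemma Eop_brk i j a b :
  Eop i j (brk R a b) = (j == a)%:R * brk R i b + (j == b)%:R * brk R a i.
Proof. rewrite /brk Eop_add Eop_opp !Eop_mul !Eop_zv; ring. Qed.

Lemma brkxx i : brk R i i = 0.
Proof. by rewrite /brk mulrC subrr. Qed.

Lemma brk_antisym i j : brk R j i = - brk R i j.
Proof. by rewrite /brk opprB [zv R j 0 * _]mulrC [zv R j 1 * _]mulrC. Qed.

Definition kstate (a b c d e f : int) : P :=
  dpow (brk R 0 1) a * dpow (brk R 2 3) b * dpow (brk R 0 2) c *
  dpow (brk R 1 3) d * dpow (brk R 0 3) e * dpow (brk R 1 2) f.

Lemma Eop10_kstate a b c d e f :
  Eop 1 0 (kstate a b c d e f) =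
  (f + 1)%:~R *: kstate a b (c - 1) d e (f + 1)
  + (d + 1)%:~R *: kstate a b c (d + 1) (e - 1) f.
Proof.
have := mul_dpow (brk R 1 2) (f + 1); have := mul_dpow (brk R 1 3) (d + 1).
rewrite /kstate !addrK !Eop_mul !Eop_dpow !Eop_brk /= brkxx -!mul_mpolyC => h1 h2.
ring: h1 h2.
Qed.

Lemma Eop01_kstate a b c d e f :
  Eop 0 1 (kstate a b c d e f) =
  (c + 1)%:~R *: kstate a b (c + 1) d e (f - 1)
  + (e + 1)%:~R *: kstate a b c (d - 1) (e + 1) f.
Proof.
have := mul_dpow (brk R 0 2) (c + 1); have := mul_dpow (brk R 0 3) (e + 1).
rewrite /kstate !addrK !Eop_mul !Eop_dpow !Eop_brk /= brkxx -!mul_mpolyC => h1 h2.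
ring: h1 h2.
Qed.

Lemma Eop20_kstate a b c d e f :
  Eop 2 0 (kstate a b c d e f) =
  - (f + 1)%:~R *: kstate (a - 1) b c d e (f + 1)
  + (b + 1)%:~R *: kstate a (b + 1) c d (e - 1) f.
Proof.
have := mul_dpow (brk R 1 2) (f + 1); have := mul_dpow (brk R 2 3) (b + 1).
rewrite /kstate !addrK !Eop_mul !Eop_dpow !Eop_brk /= brkxx (brk_antisym 1 2).
rewrite -!mul_mpolyC => h1 h2.
ring: h1 h2.
Qed.

Lemma Eop02_kstate a b c d e f :
  Eop 0 2 (kstate a b c d e f) =
  - (a + 1)%:~R *: kstate (a + 1) b c d e (f - 1)
  + (e + 1)%:~R *: kstate a (b - 1) c d (e + 1) f.
Proof.
have := mul_dpow (brk R 0 1) (a + 1); have := mul_dpow (brk R 0 3) (e + 1).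
rewrite /kstate !addrK !Eop_mul !Eop_dpow !Eop_brk /= brkxx (brk_antisym 0 1).
rewrite -!mul_mpolyC => h1 h2.
ring: h1 h2.
Qed.

Definition brk_weight (i x y : 'I_4) : int := (i == x) + (i == y).

Lemma Eop_diag_brk i x y : Eop i i (brk R x y) = (brk_weight i x y)%:~R *: brk R x y.
Proof.
rewrite Eop_brk /brk_weight.
case: (eqVneq i x) => [<-|_]; case: (eqVneq i y) => [<-|_] //=;
  by rewrite ?brkxx ?scaler0 ?mul0r ?mulr0 ?mul1r ?addr0 ?add0r ?scale1r ?mulr0z ?scale0r.
Qed.

Lemma Eop_diag_kstate i a b c d e f :
  Eop i i (kstate a b c d e f) =
  (a * brk_weight i 0 1 + b * brk_weight i 2 3 + c * brk_weight i 0 2 +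
   d * brk_weight i 1 3 + e * brk_weight i 0 3 + f * brk_weight i 1 2)%:~R
    *: kstate a b c d e f.
Proof.
have mul_dpowW x y n : dpow (brk R x y) (n - 1) * Eop i i (brk R x y) =
    (n * brk_weight i x y)%:~R *: dpow (brk R x y) n.
  by rewrite Eop_diag_brk -scalerAr mulrC mul_dpow scalerA -intrM mulrC.
rewrite /kstate !Eop_mul !Eop_dpow !mul_dpowW -!mul_mpolyC.
ring.
Qed.

Lemma twoJJ01_kstate a b c d e f :
  twoJJ 0 1 (kstate a b c d e f) =
  ((c * (f + 1) + e * (d + 1) - (a + c + e))%:~R - 2^-1 * ((a + c + e) * (a + d + f))%:~R)
     *: kstate a b c d e f
  + ((e + 1) * (f + 1))%:~R *: kstate a b (c - 1) (d - 1) (e + 1) (f + 1)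
  + ((c + 1) * (d + 1))%:~R *: kstate a b (c + 1) (d + 1) (e - 1) (f - 1).
Proof.
rewrite /twoJJ Eop10_kstate Eop_add !Eop_scale !Eop01_kstate !Eop_diag_kstate Eop_scale.
rewrite Eop_diag_kstate /brk_weight /= !subrK !addrK -!mul_mpolyC.
ring.
Qed.

Lemma twoJJ02_kstate a b c d e f :
  twoJJ 0 2 (kstate a b c d e f) =
  ((a * (f + 1) + e * (b + 1) - (a + c + e))%:~R - 2^-1 * ((a + c + e) * (b + c + f))%:~R)
     *: kstate a b c d e f
  - ((e + 1) * (f + 1))%:~R *: kstate (a - 1) (b - 1) c d (e + 1) (f + 1)
  - ((a + 1) * (b + 1))%:~R *: kstate (a + 1) (b + 1) c d (e - 1) (f - 1).
Proof.
rewrite /twoJJ Eop20_kstate Eop_add !Eop_scale !Eop02_kstate !Eop_diag_kstate Eop_scale.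
rewrite Eop_diag_kstate /brk_weight /= !subrK !addrK -!mul_mpolyC.
ring.
Qed.

End SpinNetwork.

Lemma intr_natE (F : archiNumDomainType) (n : int) : (n%:~R : F) \is a Num.nat = (0 <= n).
Proof. by rewrite natrEint intr_int ler0z. Qed.

Section StatesAsKstates.
Variable R : numFieldType.

Lemma bfac_dpow x y (n : int) : 0 <= n -> bfac R x y n%:~R = dpow (brk R x y) n.
Proof. by case: n => // m _; rewrite /bfac -pmulrn natrK. Qed.

Lemma kstate_neg a b c d e f :
  ~~ [&& 0 <= a, 0 <= b, 0 <= c, 0 <= d, 0 <= e & 0 <= f] -> kstate R a b c d e f = 0.
Proof.
rewrite !negb_and -!ltNge /kstate.
by do ![case/orP => [/dpow_neg -> | ]]; rewrite ?(mulr0, mul0r) // => /dpow_neg ->;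
  rewrite mulr0.
Qed.

Lemma state_kstate j1 j2 j3 j4 S T (a b c d e f : int) :
  k12 j1 j2 j3 j4 S T = a%:~R -> k34 j1 j2 j3 j4 S T = b%:~R ->
  k13 j1 j2 j3 j4 S T = c%:~R -> k24 j1 j2 j3 j4 S T = d%:~R ->
  k14 j1 j2 j3 j4 S T = e%:~R -> k23 j1 j2 j3 j4 S T = f%:~R ->
  state R j1 j2 j3 j4 S T = kstate R a b c d e f.
Proof.
rewrite /state /admissible => -> -> -> -> -> ->; rewrite !intr_natE.
case: ifP => [/and5P[a0 b0 c0 d0 /andP[e0 f0]] | /negbT neg]; last by rewrite kstate_neg.
by rewrite /kstate !bfac_dpow.
Qed.

Lemma state_shift j1 j2 j3 j4 S T (s t a b c d e f : int) :
  k12 j1 j2 j3 j4 S T = a%:~R -> k34 j1 j2 j3 j4 S T = b%:~R ->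
  k13 j1 j2 j3 j4 S T = c%:~R -> k24 j1 j2 j3 j4 S T = d%:~R ->
  k14 j1 j2 j3 j4 S T = e%:~R -> k23 j1 j2 j3 j4 S T = f%:~R ->
  state R j1 j2 j3 j4 (S + s%:~R) (T + t%:~R) =
  kstate R (a - s) (b - s) (c - t) (d - t) (e + s + t) (f + s + t).
Proof.
rewrite /k12 /k34 /k13 /k24 /k14 /k23 /Utot => *.
by apply: state_kstate; rewrite /k12 /k34 /k13 /k24 /k14 /k23 /Utot !(intrD, intrN); lra.
Qed.

End StatesAsKstates.

Lemma coupling12_kE j1 j2 j3 j4 S T :
  let a := k12 j1 j2 j3 j4 S T in
  let c := k13 j1 j2 j3 j4 S T in let d := k24 j1 j2 j3 j4 S T in
  let e := k14 j1 j2 j3 j4 S T in let f := k23 j1 j2 j3 j4 S T in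
  S * (S + 1) - j1 * (j1 + 1) - j2 * (j2 + 1) =
  c * (f + 1) + e * (d + 1) - (a + c + e) - 2^-1 * ((a + c + e) * (a + d + f)) + e * f + c * d.
Proof. rewrite /k12 /k34 /k13 /k24 /k14 /k23 /Utot /=; by field. Qed.

Theorem mainTheorem9 (R : numFieldType) (j1 j2 j3 j4 S T : rat) :
  (* spins: nonnegative half-integers with integer total J *)
  (2 * j1 \is a Num.nat) -> (2 * j2 \is a Num.nat) ->
  (2 * j3 \is a Num.nat) -> (2 * j4 \is a Num.nat) ->
  (j1 + j2 + j3 + j4 \is a Num.int) ->
  admissible j1 j2 j3 j4 S T ->
  let st := state R j1 j2 j3 j4 in
  let r : rat -> R := ratr in
  let a14 := k14 j1 j2 j3 j4 S T in let a23 := k23 j1 j2 j3 j4 S T in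
  let a13 := k13 j1 j2 j3 j4 S T in let a24 := k24 j1 j2 j3 j4 S T in
  [/\ twoJJ 0 1 (st S T) =
        r (S * (S + 1) - j1 * (j1 + 1) - j2 * (j2 + 1)) *: st S T
        + (r ((a14 + 1) * (a23 + 1)) *: st S (T + 1) - r (a14 * a23) *: st S T)
        + (r ((a13 + 1) * (a24 + 1)) *: st S (T - 1) - r (a13 * a24) *: st S T),
      (* J1.J2 does not change S *)
      exists s : seq (rat * R),
        2^-1 *: twoJJ 0 1 (st S T) = \sum_(p <- s) p.2 *: st S p.1
    & (* J1.J3 does not change T *)
      exists s : seq (rat * R),
        2^-1 *: twoJJ 0 2 (st S T) = \sum_(p <- s) p.2 *: st p.1 T].
Proof.
move=> _ _ _ _ _ adm st r a14 a23 a13 a24.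
case/and5P: adm => /intr_nat/intrP[a ka] /intr_nat/intrP[b kb] /intr_nat/intrP[c kc]
  /intr_nat/intrP[d kd] /andP[/intr_nat/intrP[e ke] /intr_nat/intrP[f kf]].
have shifted s t S' T' : S' = S + s%:~R -> T' = T + t%:~R ->
    st S' T' = kstate R (a - s) (b - s) (c - t) (d - t) (e + s + t) (f + s + t).
  by move=> -> ->; apply: state_shift.
have st0 : st S T = kstate R a b c d e f by apply: state_kstate.
have stTp : st S (T + 1) = kstate R a b (c - 1) (d - 1) (e + 1) (f + 1).
  by rewrite (shifted 0 1) ?mulr0z ?addr0 //; congr kstate; ring.
have stTm : st S (T - 1) = kstate R a b (c + 1) (d + 1) (e - 1) (f - 1).
  by rewrite (shifted 0 (-1)) ?mulr0z ?mulrN1z ?addr0 //; congr kstate; ring.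
have stSp : st (S + 1) T = kstate R (a - 1) (b - 1) c d (e + 1) (f + 1).
  by rewrite (shifted 1 0) ?mulr0z ?addr0 //; congr kstate; ring.
have stSm : st (S - 1) T = kstate R (a + 1) (b + 1) c d (e - 1) (f - 1).
  by rewrite (shifted (-1) 0) ?mulr0z ?mulrN1z ?addr0 //; congr kstate; ring.
split.
- rewrite st0 stTp stTm twoJJ01_kstate /r /a14 /a23 /a13 /a24.
  rewrite (coupling12_kE j1 j2 j3 j4 S T) ka kc kd ke kf.
  rewrite !(rmorphD, rmorphB, rmorphN, rmorphM, rmorph1, fmorphV, rmorph_nat, rmorph_int).
  by rewrite -!mul_mpolyC; ring.
- exists [:: (T, 2^-1 * ((c * (f + 1) + e * (d + 1) - (a + c + e))%:~R
                        - 2^-1 * ((a + c + e) * (a + d + f))%:~R));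
             (T + 1, 2^-1 * ((e + 1) * (f + 1))%:~R);
             (T - 1, 2^-1 * ((c + 1) * (d + 1))%:~R)].
  rewrite !big_cons big_nil /= st0 stTp stTm twoJJ01_kstate -!mul_mpolyC; ring.
- exists [:: (S, 2^-1 * ((a * (f + 1) + e * (b + 1) - (a + c + e))%:~R
                        - 2^-1 * ((a + c + e) * (b + c + f))%:~R));
             (S + 1, - 2^-1 * ((e + 1) * (f + 1))%:~R);
             (S - 1, - 2^-1 * ((a + 1) * (b + 1))%:~R)].
  rewrite !big_cons big_nil /= st0 stSp stSm twoJJ02_kstate -!mul_mpolyC; ring.
Qed.
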